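(* Let $m\ge 2$ and let $n_1,\dots,n_m\ge 4$ be even integers. Then the partition dimension of the even chain cycle $\mathcal{C}(C_{n_1},\dots,C_{n_m})$ equals $3$.
   Context: Let $C_{n_1},\dots,C_{n_m}$ be pairwise disjoint cycles, $V(C_{n_i})=\{v^i_1,\dots,v^i_{n_i}\}$ with $v^i_j$ adjacent to $v^i_{j+1}$ (indices mod $n_i$). The even chain cycle $\mathcal{C}(C_{n_1},\dots,C_{n_m})$ (all $n_i$ even) is obtained from the disjoint union of these cycles by identifying $v^i_{n_i/2+1}$ with $v^{i+1}_1$ for each $i=1,\dots,m-1$. For an ordered partition $\Pi=\{Q_1,\dots,Q_k\}$ of $V(G)$, $r(v\mid\Pi)=(d(v,Q_1),\dots,d(v,Q_k))$ where $d(v,Q)=\min_{q\in Q}d(v,q)$; $\Pi$ is resolving if distinct vertices have distinct representations; the partition dimension $pd(G)$ is the minimum $k$ for which a resolving $k$-partition exists. *)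

From mathcomp Require Import all_boot.
Set Implicit Arguments. Unset Strict Implicit. Unset Printing Implicit Defensive.

Section GraphNotions.
Variables (T : finType) (e : rel T).

Fixpoint walkb (k : nat) (u v : T) : bool :=
  if k is k'.+1 then [exists w, e u w && walkb k' w v] else u == v.

(* graph distance: least k with a walk of length k (graphs considered here are
   connected, so some k < #|T| works) *)
Definition gdist (u v : T) : nat := find (fun k => walkb k u v) (iota 0 #|T|).

(* An ordered k-partition Pi = {Q_0,...,Q_{k-1}} is encoded by the class map
   f : T -> 'I_k, Q_j = f^-1(j).  d(v, Q_j) = min_{q in Q_j} d(v,q). *)
Definition dist_class k (f : {ffun T -> 'I_k}) (j : 'I_k) (v : T) : nat :=
  \big[minn/#|T|]_(q | f q == j) gdist v q.

Definition resolving_partition k (f : {ffun T -> 'I_k}) : bool :=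
  [forall j : 'I_k, exists q, f q == j] &&
  [forall u, forall v, (u != v) ==> [exists j, dist_class f j u != dist_class f j v]].

(* partition dimension: least k admitting a resolving k-partition
   (the partition into singletons is resolving, so k <= #|T| exists) *)
Definition pdim : nat :=
  find (fun k => [exists f : {ffun T -> 'I_k}, resolving_partition f]) (iota 0 #|T|.+1).

End GraphNotions.

(* Cycles are indexed 0..m-1 with lengths n 0, ..., n (m-1).  Before gluing, the
   disjoint union is numbered 'I_M, M = sum n_i: vertex v^i_{j+1} (0-based j < n i)
   of cycle i is the number off i + j. *)
Section ChainCycle.
Variables (m : nat) (n : nat -> nat).

Definition off (i : nat) : nat := sumn [seq n k | k <- iota 0 i].
Definition rawM : nat := off m.

Definition raw_adj (p q : nat) : bool :=
  [exists i : 'I_m,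
    [&& off i <= p < off i + n i, off i <= q < off i + n i &
        ((p - off i).+1 %% n i == q - off i) || ((q - off i).+1 %% n i == p - off i)]].

(* gluing: v^{i+1}_1 (raw off (i+1)) is identified with v^i_{n_i/2+1}
   (raw off i + n_i/2), for i = 0..m-2; canon picks the latter as representative *)
Definition canon (p : nat) : nat :=
  if [seq i <- iota 0 m.-1 | p == off i.+1] is i :: _ then off i + (n i)./2 else p.

Definition chain_vertex := {p : 'I_rawM | canon p == p}.

Definition chain_adj : rel chain_vertex := fun u v =>
  [exists p : 'I_rawM, exists q : 'I_rawM,
     [&& canon p == val (val u), canon q == val (val v) & raw_adj p q]].

End ChainCycle.

(* The partition dimension of the chain cycle C(C_{n_0}, ..., C_{n_{m-1}}), m >= 2,
   n_i >= 4, is 3.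

   One class cannot separate two vertices.  A resolving 2-partition
   leaves every vertex w with at most three neighbours: a neighbour in the class of
   w is at distance d - 1 or d + 1 from the other class (d being that of w), and a
   neighbour in the other class is at distance 1 from the class of w, so only three
   representations are available.  The glued vertex v^0_{n_0/2+1} = v^1_1 has four
   neighbours.

   With x0 = v^0_1 and level(v^i_{j+1}) = sum_{k<i} n_k/2 +
   min(j, n_i - j), a potential argument shows level(v) = d(v, x0).  The partition
   {x0}, {open first halves of the cycles}, {the rest} is resolving, because the
   level is injective on each of the last two classes. *)

From Pilot Require Import Defs.
From mathcomp Require Import all_boot zify.

Set Implicit Arguments. Unset Strict Implicit. Unset Printing Implicit Defensive.

(* [find a (iota 0 N)] is the least k < N satisfying [a], or N if there is none;
   both graph distances and the partition dimension are defined this way. *)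
Section LeastIndex.
Variables (a : pred nat) (N : nat).

Lemma find_iota_le k : a k -> k < N -> find a (iota 0 N) <= k.
Proof.
move=> ak kN; rewrite leqNgt; apply/negP => lt_k.
by have := before_find 0 lt_k; rewrite nth_iota // add0n ak.
Qed.

Lemma find_iota_holds : find a (iota 0 N) < N -> a (find a (iota 0 N)).
Proof.
move=> lt_N; have has_a : has a (iota 0 N) by rewrite has_find size_iota.
by have := nth_find 0 has_a; rewrite nth_iota ?add0n // -{2}(size_iota 0 N) -has_find.
Qed.

Lemma find_iota_least k : k < N -> a k -> (forall l, l < k -> ~~ a l) ->
  find a (iota 0 N) = k.
Proof.
move=> kN ak below; apply/eqP; rewrite eqn_leq find_iota_le //=.
rewrite leqNgt; apply/negP => lt_k.
by have := below _ lt_k; rewrite find_iota_holds // (leq_trans lt_k (ltnW kN)).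
Qed.

End LeastIndex.

Lemma bigmin_le_term (I : eqType) (s : seq I) (N : nat) (P : pred I) (F : I -> nat) q :
  q \in s -> P q -> \big[minn/N]_(i <- s | P i) F i <= F q.
Proof.
elim: s => // x s IH; rewrite in_cons big_cons => /orP [/eqP <- -> | qs Pq].
  exact: geq_minl.
case: ifP => _; last exact: IH.
exact: leq_trans (geq_minr _ _) (IH qs Pq).
Qed.

Section GraphDistance.
Variables (T : finType) (e : rel T).
Implicit Types u v w x : T.

Lemma gdist_le_card u v : gdist e u v <= #|T|.
Proof. by rewrite /gdist -{2}(size_iota 0 #|T|) find_size. Qed.

Lemma gdist_walk u v : gdist e u v < #|T| -> walkb e (gdist e u v) u v.
Proof. exact: find_iota_holds. Qed.

Lemma gdist_le_walk k u v : walkb e k u v -> gdist e u v <= k.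
Proof.
move=> walk_k; case: (ltnP k #|T|) => kN; first exact: find_iota_le.
exact: leq_trans (gdist_le_card u v) kN.
Qed.

Lemma gdist_eq0 u v : (gdist e u v == 0) = (u == v).
Proof.
apply/eqP/eqP => [d0|->]; last by apply/eqP; rewrite -leqn0; apply: gdist_le_walk => /=.
have T_gt0 : 0 < #|T| by apply/card_gt0P; exists u.
by have := gdist_walk (u := u) (v := v); rewrite d0 => /(_ T_gt0) /= /eqP.
Qed.

Lemma gdist_edge_succ u w q : e u w -> gdist e u q <= (gdist e w q).+1.
Proof.
move=> uw; case: (ltnP (gdist e w q) #|T|) => dN.
  apply: gdist_le_walk => /=; apply/existsP; exists w; rewrite uw; exact: gdist_walk.
exact: leq_trans (gdist_le_card _ _) (leqW dN).
Qed.

Lemma gdist_edge u v : e u v -> gdist e u v <= 1.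
Proof. by move=> uv; apply: gdist_le_walk => /=; apply/existsP; exists v; rewrite uv /=. Qed.

Lemma gdist_potential x (phi : T -> nat) :
  (forall v, (phi v == 0) = (v == x)) ->
  (forall u v, e u v -> phi u <= (phi v).+1) ->
  (forall v, 0 < phi v -> exists u, e v u /\ (phi u).+1 = phi v) ->
  forall v, gdist e v x = phi v.
Proof.
move=> phi0 phi_lip phi_descent.
have walk_ge k v : walkb e k v x -> phi v <= k.
  elim: k v => [|k IH] v /=; first by move=> /eqP ->; rewrite leqn0 phi0.
  case/existsP=> w /andP [vw wk]; have := phi_lip _ _ vw; have := IH _ wk; lia.
have walk_phi k v : phi v = k -> walkb e k v x.
  elim: k v => [|k IH] v /=; first by move=> /eqP; rewrite phi0.
  move=> pv; have [|u [vu pu]] := phi_descent v; first by rewrite pv.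
  by apply/existsP; exists u; rewrite vu /=; apply: IH; move: pu; rewrite pv => [[]].
have phi_onto p : forall v k, phi v = p -> k <= p -> exists u, phi u = k.
  elim: p => [|p IH] v k pv; first by rewrite leqn0 => /eqP ->; exists v.
  case: (ltnP k p.+1) => [kp _ | pk kp].
    have [|u [_ pu]] := phi_descent v; first by rewrite pv.
    by apply: (IH u); [move: pu; rewrite pv => [[]] | rewrite -ltnS].
  by exists v; apply/eqP; rewrite pv eqn_leq kp pk.
move=> v; have phi_lt_card : phi v < #|T|.
  have := @uniq_leq_size _ (iota 0 (phi v).+1) (map phi (enum T)) (iota_uniq _ _).
  rewrite size_iota size_map -cardT; apply => k; rewrite mem_iota add0n => /andP [_ kv].
  by have [u <-] := phi_onto _ v k erefl kv; apply: map_f; rewrite mem_enum.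
have d_le : gdist e v x <= phi v by apply: gdist_le_walk; exact: walk_phi.
apply/eqP; rewrite eqn_leq d_le /=; apply: walk_ge; apply: gdist_walk.
exact: leq_ltn_trans d_le phi_lt_card.
Qed.

End GraphDistance.

Section ClassDistance.
Variables (T : finType) (e : rel T) (k : nat) (f : {ffun T -> 'I_k}).
Implicit Types (u v w : T) (j : 'I_k).

Lemma dist_class_le j v q : f q = j -> dist_class e f j v <= gdist e v q.
Proof. by move=> fq; apply: bigmin_le_term; rewrite ?mem_index_enum ?fq. Qed.

Lemma dist_class_le_card j v : dist_class e f j v <= #|T|.
Proof.
apply: (big_ind (fun d => d <= #|T|)) => // [d d' dN _ | q _].
  exact: leq_trans (geq_minl _ _) dN.
exact: gdist_le_card.
Qed.

Lemma dist_class_attained j v : dist_class e f j v = #|T| \/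
  exists2 q, f q = j & dist_class e f j v = gdist e v q.
Proof.
apply: (big_ind (fun d => d = #|T| \/ exists2 q, f q = j & d = gdist e v q)).
- by left.
- by move=> d d' hd hd'; rewrite /minn; case: ifP.
- by move=> q /eqP fq; right; exists q.
Qed.

Lemma dist_class_eq0 j v : (dist_class e f j v == 0) = (f v == j).
Proof.
apply/eqP/eqP => [d0|fv]; last first.
  by apply/eqP; rewrite -leqn0 (leq_trans (dist_class_le v fv)) // leqn0 gdist_eq0.
have T_gt0 : 0 < #|T| by apply/card_gt0P; exists v.
case: (dist_class_attained j v) => [dN|[q fq]]; first by move: T_gt0; rewrite -dN d0.
by rewrite d0 => /esym/eqP; rewrite gdist_eq0 => /eqP ->.
Qed.

Lemma dist_class_edge_succ j u w : e u w -> dist_class e f j u <= (dist_class e f j w).+1.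
Proof.
move=> uw; case: (dist_class_attained j w) => [->|[q fq ->]].
  exact: leq_trans (dist_class_le_card _ _) (leqnSn _).
exact: leq_trans (dist_class_le u fq) (gdist_edge_succ q uw).
Qed.

Lemma dist_class_edge j u w : e u w -> f w = j -> dist_class e f j u <= 1.
Proof. by move=> uw fw; exact: leq_trans (dist_class_le u fw) (gdist_edge uw). Qed.

End ClassDistance.

Section ResolvingPartitions.
Variables (T : finType) (e : rel T).

Lemma resolving_separates k (f : {ffun T -> 'I_k}) : resolving_partition e f ->
  forall u v, u != v -> exists j, dist_class e f j u != dist_class e f j v.
Proof.
by case/andP=> _ /forallP sep u v uv; move: (sep u) => /forallP /(_ v) /implyP /(_ uv) /existsP.
Qed.

Lemma pdim_eq k : k <= #|T| ->
  (exists f : {ffun T -> 'I_k}, resolving_partition e f) ->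
  (forall l, l < k -> forall f : {ffun T -> 'I_l}, ~~ resolving_partition e f) ->
  pdim e = k.
Proof.
move=> kT [f f_res] none_below; apply: find_iota_least => //.
  by apply/existsP; exists f.
by move=> l lk; apply/existsP => [[g g_res]]; have := none_below l lk g; rewrite g_res.
Qed.

Lemma no_partition0 (v : T) (f : {ffun T -> 'I_0}) : False.
Proof. by case: (f v). Qed.

Lemma not_resolving1 (u v : T) (f : {ffun T -> 'I_1}) : u != v -> ~~ resolving_partition e f.
Proof.
move=> uv; apply/negP => /resolving_separates /(_ u v uv) [j].
have class0 x : dist_class e f j x = 0 by apply/eqP; rewrite dist_class_eq0 !ord1.
by rewrite !class0.
Qed.

End ResolvingPartitions.

Section TwoPartitions.
Variables (T : finType) (e : rel T) (f : {ffun T -> 'I_2}).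
Hypothesis e_sym : symmetric e.
Hypothesis f_res : resolving_partition e f.

Lemma ord2 (i : 'I_2) : i = ord0 \/ i = ord_max.
Proof. by case: i => [[|[|//]] lt_i]; [left|right]; apply: val_inj. Qed.

(* Distance of x to the class it does not belong to (the other one is 0). *)
Definition cross_dist x := dist_class e f ord0 x + dist_class e f ord_max x.

Lemma dist_class2 j x : dist_class e f j x = if f x == j then 0 else cross_dist x.
Proof.
have own0 : dist_class e f (f x) x = 0 by apply/eqP; rewrite dist_class_eq0.
case: ifP => [/eqP <- // | fxj]; rewrite /cross_dist.
by case: (ord2 j) fxj => ->; case: (ord2 (f x)) own0 => -> ->; rewrite ?addn0.
Qed.

Lemma cross_dist_inj x y : x != y -> f x = f y -> cross_dist x != cross_dist y.
Proof.
move=> xy fxy; have [j] := resolving_separates f_res xy.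
by rewrite !dist_class2 fxy; case: ifP => //; apply: contra => /eqP ->.
Qed.

Section Neighbour.
Variables (w x : T).
Hypotheses (wx : e w x) (x_neq_w : x != w).

Lemma cross_dist_same_class : f x = f w ->
  cross_dist x = (cross_dist w).+1 \/ (cross_dist x).+1 = cross_dist w.
Proof.
move=> fxw; have [j' other] : exists j', f w != j'.
  by case: (ord2 (f w)) => ->; [exists ord_max | exists ord0].
have xw : e x w by rewrite e_sym.
have := dist_class_edge_succ f j' wx; have := dist_class_edge_succ f j' xw.
by have := cross_dist_inj x_neq_w fxw; rewrite !dist_class2 fxw (negbTE other); lia.
Qed.

Lemma cross_dist_other_class : f x != f w -> cross_dist x = 1.
Proof.
move=> fxw; have xw : e x w by rewrite e_sym.
have := dist_class_edge xw (erefl (f w)).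
by have := dist_class_eq0 e f (f w) x; rewrite (negbTE fxw) !dist_class2 (negbTE fxw); lia.
Qed.

End Neighbour.

(* Neighbours of w are coded by (same class, cross distance below that of w) in
   {0,1} or by 2 (other class, where the cross distance is always 1); the code is
   injective, hence w has at most three neighbours. *)
Lemma neighbours_le3 w (s : seq T) : uniq (w :: s) -> all (e w) s -> size s <= 3.
Proof.
move=> /= /andP [w_notin_s uniq_s] /allP ws.
pose code x : nat := if f x == f w then nat_of_bool (cross_dist x < cross_dist w) else 2.
have code_inj : {in s &, injective code}.
  move=> x y xs ys; apply: contra_eq => xy.
  have [x_w y_w] : x != w /\ y != w by split; apply: contraNneq w_notin_s => <-.
  rewrite /code; case: (eqVneq (f x) (f w)) => fx; case: (eqVneq (f y) (f w)) => fy /=.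
  - (* both in the class of w: distinct cross distances, each one off that of w *)
    have := cross_dist_inj xy (etrans fx (esym fy)).
    by case: (cross_dist_same_class (ws x xs) x_w fx);
       case: (cross_dist_same_class (ws y ys) y_w fy); lia.
  - by case: (_ < _).
  - by case: (_ < _).
  - (* both in the other class, with the same cross distance 1 *)
    have fxy : f x = f y.
      by case: (ord2 (f x)) fx => ->; case: (ord2 (f y)) fy => ->; case: (ord2 (f w)) => ->.
    have := cross_dist_inj xy fxy.
    by rewrite (cross_dist_other_class (ws x xs) x_w fx) (cross_dist_other_class (ws y ys) y_w fy).
rewrite -(size_map code) -(size_iota 0 3); apply: uniq_leq_size.
  by rewrite map_inj_in_uniq.
by move=> _ /mapP [x _ ->]; rewrite mem_iota /code; case: ifP => //; case: (_ < _).
Qed.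

End TwoPartitions.

Definition prefix_sum (g : nat -> nat) (i : nat) : nat := sumn [seq g k | k <- iota 0 i].

Lemma prefix_sumS g i : prefix_sum g i.+1 = prefix_sum g i + g i.
Proof. by rewrite /prefix_sum -addn1 iotaD map_cat sumn_cat /= addn0. Qed.

Lemma leq_prefix_sum g i i' : i <= i' -> prefix_sum g i <= prefix_sum g i'.
Proof.
move=> /subnK <-; elim: (i' - i) => [|k IH] //; rewrite addSn prefix_sumS.
exact: leq_trans IH (leq_addr _ _).
Qed.

Lemma modn_succ j k : j < k -> j.+1 %% k = if j.+1 == k then 0 else j.+1.
Proof. by move=> jk; case: eqP => [->|ne]; [exact: modnn | apply: modn_small; lia]. Qed.

Section ChainCycle.
Variables (m : nat) (n : nat -> nat).
Hypothesis m_ge2 : 2 <= m.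
Hypothesis n_ge4 : forall i, i < m -> 4 <= n i.

Local Notation off := (off n).
Local Notation canon := (canon m n).
Local Notation rawM := (rawM m n).
Local Notation raw_adj := (raw_adj m n).
Local Notation T := (chain_vertex m n).
Local Notation adj := (@chain_adj m n).

Lemma n0_ge4 : 4 <= n 0. Proof. by apply: n_ge4; lia. Qed.
Lemma n1_ge4 : 4 <= n 1. Proof. by apply: n_ge4; lia. Qed.

Lemma offS i : off i.+1 = off i + n i. Proof. exact: prefix_sumS. Qed.
Lemma leq_off i i' : i <= i' -> off i <= off i'. Proof. exact: leq_prefix_sum. Qed.

Lemma raw_lt i j : i < m -> j < n i -> off i + j < rawM.
Proof. by move=> im jn; have := leq_off im; rewrite offS /Defs.rawM; lia. Qed.

Lemma raw_coords p : p < rawM -> exists i j, [/\ i < m, j < n i & p = off i + j].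
Proof.
rewrite /Defs.rawM; elim: m => [|M IH] //; case: (ltnP p (off M)) => [pM _ | Mp].
  by have [i [j [iM jn ->]]] := IH pM; exists i, j; split => //; lia.
by rewrite offS => pM; exists M, (p - off M); split; lia.
Qed.

Lemma raw_coords_inj i j i' j' : j < n i -> j' < n i' -> off i + j = off i' + j' ->
  i = i' /\ j = j'.
Proof.
move=> jn jn' eq_raw; case: (ltngtP i i') => [ii'|i'i|eq_i].
- by have := leq_off ii'; rewrite offS; lia.
- by have := leq_off i'i; rewrite offS; lia.
- by move: eq_raw; rewrite eq_i; split; lia.
Qed.

Definition cycle_of (p : nat) : nat := count (fun k => off k.+1 <= p) (iota 0 m).

Lemma cycle_ofE i j : i < m -> j < n i -> cycle_of (off i + j) = i.
Proof.
move=> im jn; rewrite /cycle_of (_ : m = i + (m - i)); last lia.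
rewrite iotaD count_cat add0n (@eq_in_count _ _ predT); last first.
  by move=> k; rewrite mem_iota => /andP [_ ki] /=; apply: leq_trans (leq_off ki) (leq_addr _ _).
rewrite count_predT size_iota (@eq_in_count _ _ pred0) ?count_pred0 ?addn0 //.
by move=> k; rewrite mem_iota => /andP [ik _] /=; have := @leq_off i.+1 k.+1 ik; rewrite offS; lia.
Qed.

Lemma canon_glue i : i.+1 < m -> canon (off i.+1) = off i + (n i)./2.
Proof.
move=> im; rewrite /Defs.canon.
have mem_i : i \in [seq k <- iota 0 m.-1 | off i.+1 == off k.+1].
  by rewrite mem_filter eqxx mem_iota /=; lia.
case E: [seq k <- iota 0 m.-1 | _ == _] mem_i => [//|k s] _.
have : k \in [seq k <- iota 0 m.-1 | off i.+1 == off k.+1] by rewrite E inE eqxx.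
rewrite mem_filter mem_iota => /andP [/eqP eq_off km].
have [n_k n_i] := (n_ge4 (i := k.+1) ltac:(lia), n_ge4 (i := i.+1) im).
by have [[->] _] := @raw_coords_inj k.+1 0 i.+1 0 ltac:(lia) ltac:(lia) ltac:(by rewrite !addn0).
Qed.

Lemma canon_fix i j : i < m -> j < n i -> (i == 0) || (j != 0) -> canon (off i + j) = off i + j.
Proof.
move=> im jn ij; rewrite /Defs.canon.
case E: [seq k <- iota 0 m.-1 | off i + j == off k.+1] => [//|k s].
have : k \in [seq k <- iota 0 m.-1 | off i + j == off k.+1] by rewrite E inE eqxx.
rewrite mem_filter mem_iota => /andP [/eqP eq_off km].
have n_k := n_ge4 (i := k.+1) ltac:(lia).
by move: ij; have [-> ->] := @raw_coords_inj i j k.+1 0 jn ltac:(lia) ltac:(by rewrite addn0).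
Qed.

Lemma canon_fixP i j : i < m -> j < n i -> canon (off i + j) = off i + j ->
  (i == 0) || (j != 0).
Proof.
case: i => [//|i] im jn; case: (eqVneq j 0) => [->|//]; rewrite addn0 canon_glue //.
by have := offS i; have := n_ge4 (i := i) ltac:(lia); lia.
Qed.

Lemma canon_ok p : p < rawM -> canon p < rawM /\ canon (canon p) = canon p.
Proof.
move=> pM; have [i [j [im jn ->]]] := raw_coords pM.
case: (boolP ((i == 0) || (j != 0))) => ij.
  by rewrite !canon_fix //; split => //; exact: raw_lt.
case: i im jn ij => [//|i'] im jn ij; have -> : j = 0 by lia.
have [i'm half_lt] : i' < m /\ (n i')./2 < n i' by have := n_ge4 (i := i'); lia.
have half_gt0 : (n i')./2 != 0 by have := n_ge4 i'm; lia.
by rewrite addn0 canon_glue // canon_fix ?half_gt0 ?orbT //; split; [apply: raw_lt | ].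
Qed.

(* level (v^i_{j+1}) = n_0/2 + ... + n_{i-1}/2 + min(j, n_i - j): the distance from
   v^0_1 to v^i_1 plus the distance from v^i_1 inside the cycle C_{n_i}. *)
Definition level (p : nat) : nat :=
  let i := cycle_of p in prefix_sum (fun k => (n k)./2) i + minn (p - off i) (n i - (p - off i)).

Lemma levelE i j : i < m -> j < n i ->
  level (off i + j) = prefix_sum (fun k => (n k)./2) i + minn j (n i - j).
Proof. by move=> im jn; rewrite /level cycle_ofE // addKn. Qed.

Lemma level_canon p : p < rawM -> level (canon p) = level p.
Proof.
move=> pM; have [i [j [im jn ->]]] := raw_coords pM.
case: (boolP ((i == 0) || (j != 0))) => ij; first by rewrite canon_fix.
case: i im jn ij => [//|i] im jn ij; have -> : j = 0 by lia.
have [n_i n_Si] := (n_ge4 (i := i) ltac:(lia), n_ge4 im).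
rewrite addn0 canon_glue // levelE; try lia.
by rewrite -[off i.+1]addn0 levelE ?prefix_sumS //; lia.
Qed.

Lemma raw_adj_sym p q : raw_adj p q = raw_adj q p.
Proof. by apply: eq_existsb => i; rewrite andbCA orbC. Qed.

Lemma raw_adj_next i j : i < m -> j < n i -> raw_adj (off i + j) (off i + j.+1 %% n i).
Proof.
move=> im jn; apply/existsP; exists (Ordinal im) => /=.
have := n_ge4 im; rewrite !addKn eqxx !leq_addr !ltn_add2l jn ltn_pmod //; lia.
Qed.

Lemma level_raw_adj p q : raw_adj p q -> level p <= (level q).+1.
Proof.
case/existsP => i /and3P [/andP [ip pi] /andP [iq qi] pq].
have n_i := n_ge4 (ltn_ord i).
have [a_lt b_lt] : p - off i < n i /\ q - off i < n i by lia.
have [-> ->] : p = off i + (p - off i) /\ q = off i + (q - off i) by lia.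
move: pq; rewrite !levelE // !modn_succ //.
move: (p - off i) (q - off i) a_lt b_lt => a b.
by case: (eqVneq a.+1 (n i)) => ea; case: (eqVneq b.+1 (n i)) => eb /=; lia.
Qed.

Definition raw (v : T) : nat := val (val v).

Lemma raw_lt_rawM v : raw v < rawM. Proof. exact: ltn_ord. Qed.
Lemma canon_raw v : canon (raw v) = raw v. Proof. by apply/eqP; case: v. Qed.
Lemma raw_inj : injective raw. Proof. by move=> u v /val_inj /val_inj. Qed.

Lemma rawM_gt0 : 0 < rawM. Proof. by have := @raw_lt 0 0; have := n0_ge4; lia. Qed.

Lemma canon0 : canon 0 = 0.
Proof. by apply: (@canon_fix 0 0) => //; [lia | have := n0_ge4; lia]. Qed.

Definition x0 : T := exist _ (Ordinal rawM_gt0) (introT eqP canon0).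

Lemma raw_eq0 v : (raw v == 0) = (v == x0).
Proof. by apply/eqP/eqP => [v0|->] //; apply: raw_inj. Qed.

Definition vert (p : nat) : T := odflt x0 [pick v : T | raw v == canon p].

Lemma raw_vert p : p < rawM -> raw (vert p) = canon p.
Proof.
move=> pM; rewrite /vert; case: pickP => [v /eqP //|none].
have [cp_lt cp_idem] := canon_ok pM.
by have := none (exist _ (Ordinal cp_lt) (introT eqP cp_idem)); rewrite /raw /= eqxx.
Qed.

Lemma vert_raw v : vert (raw v) = v.
Proof. by apply: raw_inj; rewrite raw_vert ?canon_raw ?raw_lt_rawM. Qed.

Lemma level_vert p : p < rawM -> level (raw (vert p)) = level p.
Proof. by move=> pM; rewrite raw_vert ?level_canon. Qed.

Lemma vertex_coords v :
  exists i j, [/\ i < m, j < n i, raw v = off i + j & (i == 0) || (j != 0)].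
Proof.
have [i [j [im jn eq_v]]] := raw_coords (raw_lt_rawM v).
by exists i, j; split => //; apply: canon_fixP => //; rewrite -eq_v canon_raw.
Qed.

Lemma vertex_coords_pos v : v != x0 ->
  exists i j, [/\ i < m, 0 < j, j < n i & raw v = off i + j].
Proof.
move=> vx0; have [i [j [im jn eq_v ij]]] := vertex_coords v.
exists i, j; split => //; rewrite lt0n; apply: contraNneq vx0 => j0.
by move: ij; rewrite -raw_eq0 eq_v j0 /= orbF => /eqP ->.
Qed.

Lemma chain_adj_sym : symmetric adj.
Proof.
move=> u v; apply/existsP/existsP => [] [p /existsP [q /and3P [pu qv pq]]];
  by exists q; apply/existsP; exists p; rewrite pu qv raw_adj_sym.
Qed.

Lemma adj_vert p q : p < rawM -> q < rawM -> raw_adj p q -> adj (vert p) (vert q).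
Proof.
move=> pM qM pq; apply/existsP; exists (Ordinal pM); apply/existsP; exists (Ordinal qM).
by have := raw_vert pM; have := raw_vert qM; rewrite /raw /= => -> ->; rewrite !eqxx.
Qed.

Lemma adj_next i j : i < m -> j < n i -> adj (vert (off i + j)) (vert (off i + j.+1 %% n i)).
Proof.
move=> im jn; apply: adj_vert; rewrite ?raw_lt ?raw_adj_next //.
by apply: ltn_pmod; lia.
Qed.

Lemma adj_succ i j : i < m -> j.+1 < n i -> adj (vert (off i + j)) (vert (off i + j.+1)).
Proof. by move=> im jn; have := @adj_next i j im (ltnW jn); rewrite modn_small. Qed.

Lemma raw_vert_coords i j : i < m -> j < n i -> 0 < j -> raw (vert (off i + j)) = off i + j.
Proof. by move=> im jn j_gt0; rewrite raw_vert ?raw_lt ?canon_fix // orbC -lt0n j_gt0. Qed.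

Lemma level_adj u v : adj u v -> level (raw u) <= (level (raw v)).+1.
Proof.
case/existsP => p /existsP [q /and3P [/eqP pu /eqP qv pq]].
by rewrite /raw -pu -qv !level_canon //; apply: level_raw_adj.
Qed.

Lemma half_sum_gt0 i : 0 < i -> 0 < prefix_sum (fun k => (n k)./2) i.
Proof.
move=> i_gt0; apply: leq_trans (leq_prefix_sum _ i_gt0); rewrite prefix_sumS.
by have := n0_ge4; rewrite /prefix_sum /=; lia.
Qed.

Lemma level_eq0 v : (level (raw v) == 0) = (v == x0).
Proof.
rewrite -raw_eq0; have [i [j [im jn -> ij]]] := vertex_coords v; rewrite levelE //.
case: i im jn ij => [|i] im jn ij; last by have := @half_sum_gt0 i.+1 isT; have := n_ge4 im; lia.
by rewrite /prefix_sum /Defs.off /= !add0n; have := n_ge4 im; lia.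
Qed.

(* Every vertex other than x0 has a neighbour one level lower: step towards the
   nearer end v^i_1 of its cycle. *)
Lemma level_descent v :
  0 < level (raw v) -> exists u, adj v u /\ (level (raw u)).+1 = level (raw v).
Proof.
move=> level_gt0; have vx0 : v != x0 by rewrite -level_eq0 -lt0n.
have [i [j [im j_gt0 jn eq_v]]] := vertex_coords_pos vx0; have n_i := n_ge4 im.
rewrite -(vert_raw v) eq_v {level_gt0 vx0}; case: (leqP j.*2 (n i)) => half.
- exists (vert (off i + j.-1)); split.
    by rewrite chain_adj_sym; have := @adj_succ i j.-1 im; rewrite prednK //; apply.
  by rewrite !level_vert ?levelE ?raw_lt //; lia.
- have next_lt : j.+1 %% n i < n i by apply: ltn_pmod; lia.
  exists (vert (off i + j.+1 %% n i)); split; first exact: adj_next.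
  by rewrite !level_vert ?levelE ?raw_lt // modn_succ //; case: eqP; lia.
Qed.

Lemma gdist_x0 v : gdist adj v x0 = level (raw v).
Proof.
apply: (gdist_potential (phi := fun v => level (raw v))) v.
- exact: level_eq0.
- exact: level_adj.
- exact: level_descent.
Qed.

(* The resolving partition: Q_0 = {x0}, Q_1 = the vertices v^i_{j+1} with
   0 < 2j < n_i (open first half of a cycle), Q_2 = all remaining vertices. *)
Definition half_class (p : nat) : nat :=
  if p == 0 then 0 else if (p - off (cycle_of p)).*2 < n (cycle_of p) then 1 else 2.

Lemma half_classE i j : i < m -> j < n i -> 0 < j ->
  half_class (off i + j) = if j.*2 < n i then 1 else 2.
Proof.
by move=> im jn j_gt0; rewrite /half_class cycle_ofE // addKn (_ : (_ == 0) = false) //; lia.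
Qed.

Definition chain_partition : {ffun T -> 'I_3} := [ffun v => inord (half_class (raw v))].

Lemma chain_partitionE v : chain_partition v = half_class (raw v) :> nat.
Proof. by rewrite ffunE inordK // /half_class; case: ifP => //; case: ifP. Qed.

Lemma chain_partition_eq0 v : (chain_partition v == ord0) = (v == x0).
Proof.
rewrite -(inj_eq (@ord_inj 3)) chain_partitionE -raw_eq0 /half_class.
by case: ifP => // _; case: ifP.
Qed.

Lemma level_lt_cycle i j i' j' : i < i' -> i' < m -> 0 < j -> j < n i -> 0 < j' -> j' < n i' ->
  level (off i + j) < level (off i' + j').
Proof.
move=> ii' i'm j_gt0 jn j'_gt0 jn'; rewrite !levelE //; try lia.
by have := leq_prefix_sum (fun k => (n k)./2) ii'; rewrite prefix_sumS; lia.
Qed.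

Lemma level_inj_class u v : chain_partition u = chain_partition v ->
  level (raw u) = level (raw v) -> u = v.
Proof.
move=> same_class same_level.
have : (u == x0) = (v == x0) by rewrite -!chain_partition_eq0 same_class.
case: (eqVneq u x0) => [-> /esym/eqP -> // | ux0 /esym/negbT vx0].
have [i [j [im j_gt0 jn eq_u]]] := vertex_coords_pos ux0.
have [i' [j' [im' j'_gt0 jn' eq_v]]] := vertex_coords_pos vx0.
move: same_class same_level => /(congr1 val); rewrite /= !chain_partitionE eq_u eq_v.
rewrite !half_classE //; case: (ltngtP i i') => [ii' _ | i'i _ | eq_i].
- by have := level_lt_cycle ii' im' j_gt0 jn j'_gt0 jn'; lia.
- by have := level_lt_cycle i'i im j'_gt0 jn' j_gt0 jn; lia.
subst i'; rewrite !levelE // => same_half same_level.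
have eq_j : j = j' by move: same_half same_level; case: ifP; case: ifP; lia.
by apply: raw_inj; rewrite eq_u eq_v eq_j.
Qed.

Lemma dist_class0 v : dist_class adj chain_partition ord0 v = level (raw v).
Proof.
rewrite -gdist_x0; apply/eqP; rewrite eqn_leq dist_class_le /=; last first.
  by apply/eqP; rewrite chain_partition_eq0.
case: (dist_class_attained adj chain_partition ord0 v) => [->|[q /eqP q0 ->]].
  exact: gdist_le_card.
by move: q0; rewrite chain_partition_eq0 => /eqP ->.
Qed.

Lemma chain_partition_onto j : exists v, chain_partition v == j.
Proof.
have n0 := n0_ge4; have classE j' : 0 < j' < n 0 ->
    nat_of_ord (chain_partition (vert (off 0 + j'))) = if j'.*2 < n 0 then 1 else 2.
  by case/andP=> j_gt0 jn; rewrite chain_partitionE raw_vert_coords ?half_classE //; lia.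
case: j => [[|[|[|//]]] j_lt].
- by exists x0; apply/eqP/ord_inj; rewrite chain_partitionE.
- by exists (vert (off 0 + 1)); apply/eqP/ord_inj; rewrite classE ?ifT //; lia.
- by exists (vert (off 0 + (n 0).-1)); apply/eqP/ord_inj; rewrite classE ?ifN //; lia.
Qed.

(* Vertices of different classes are separated by the class they lie in, and
   vertices of the same class by their distance to x0. *)
Lemma chain_partition_resolving : resolving_partition adj chain_partition.
Proof.
apply/andP; split; first by apply/forallP => j; apply/existsP; exact: chain_partition_onto.
apply/forallP => u; apply/forallP => v; apply/implyP => uv; apply/existsP.
case: (eqVneq (chain_partition u) (chain_partition v)) => [same_class | diff_class].
  exists ord0; rewrite !dist_class0; apply: contra uv => /eqP same_level.
  by apply/eqP; exact: level_inj_class.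
exists (chain_partition u); rewrite (eqP (_ : dist_class _ _ _ u == 0)) ?dist_class_eq0 //.
by rewrite eq_sym dist_class_eq0 eq_sym.
Qed.

(* The glued vertex w = v^0_{n_0/2+1} = v^1_1 has four distinct neighbours, two
   on each of the cycles C_{n_0} and C_{n_1}. *)
Lemma glue_vertex_neighbours :
  exists w (s : seq T), [/\ uniq (w :: s), all (adj w) s & size s = 4].
Proof.
have [n0 n1] := (n0_ge4, n1_ge4).
pose w := vert (off 0 + (n 0)./2).
have w_glue : vert (off 1 + 0) = w.
  apply: raw_inj; rewrite raw_vert; last by apply: raw_lt; lia.
  by rewrite addn0 canon_glue // /w raw_vert_coords //; lia.
pose s := [:: vert (off 0 + ((n 0)./2).-1); vert (off 0 + ((n 0)./2).+1);
              vert (off 1 + 1); vert (off 1 + (n 1).-1)].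
exists w, s; split => //.
- rewrite -(map_inj_uniq raw_inj) /= !raw_vert_coords ?offS; try lia.
  by rewrite /Defs.off /= !inE; lia.
- rewrite /= !andbT; apply/and4P; split.
  + by rewrite chain_adj_sym; have := @adj_succ 0 ((n 0)./2).-1; rewrite prednK; [apply; lia | lia].
  + by apply: adj_succ; lia.
  + by rewrite -w_glue; apply: adj_succ; lia.
  + rewrite -w_glue chain_adj_sym; have := @adj_next 1 (n 1).-1.
    by rewrite prednK ?modnn; [apply; lia | lia].
Qed.

End ChainCycle.

Theorem theorem2p3 (m : nat) (n : nat -> nat) :
  2 <= m ->
  (forall i, i < m -> 4 <= n i /\ ~~ odd (n i)) ->
  pdim (@chain_adj m n) = 3.
Proof.
move=> m_ge2 n_even_ge4; have n_ge4 i : i < m -> 4 <= n i by case/n_even_ge4.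
have [w [s [uniq_ws adj_ws size_s]]] := glue_vertex_neighbours m_ge2 n_ge4.
have w_neq : w != nth w s 0.
  by case/andP: uniq_ws => w_notin _; apply: contraNneq w_notin => ->; rewrite mem_nth ?size_s.
apply: pdim_eq.
- rewrite cardE (leq_trans _ (uniq_leq_size uniq_ws _)) //= ?size_s // => x _.
  by rewrite mem_enum.
- by exists (chain_partition m n); exact: chain_partition_resolving.
- case=> [|[|[|//]]] _ f.
  + by case: (no_partition0 w f).
  + exact: not_resolving1 w_neq.
  + apply/negP => f_res.
    by have := neighbours_le3 (@chain_adj_sym m n) f_res uniq_ws adj_ws; rewrite size_s.
Qed.
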